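(* Let $\mathbf{F}$ be a Baire foliage tree on a topological space $X$ and let $A\subseteq X$ be at most countable. Then there is a Baire foliage tree $\mathbf{H}$ on the subspace $X\setminus A$ such that for every $p\in X\setminus A$ there is a strictly increasing function $f_p:\omega\to\omega$ with $$\{2n+1: n\in\omega\text{ and }f_p(n)\in\mathrm{rise}_{\mathbf{F}}(p,U)\}\subseteq\mathrm{rise}_{\mathbf{H}}(p,U\setminus A)$$ for all neighbourhoods $U$ of $p$ in $X$.
   Context: Neighbourhoods are not necessarily open. $\omega=\{0,1,2,\dots\}$, ${}^{<\omega}\omega$ is the set of finite sequences of natural numbers. A tree is a strict partial order in which the set of predecessors of every node is well-ordered; $\mathrm{height}(x)$ is the ordinal isomorphic to the set of predecessors of $x$; a branch is a maximal chain; $\mathrm{sons}(x)$ is the set of immediate successors of $x$; $0$ denotes the least node. A foliage tree is a pair $\mathbf{F}=(T,l)$ with $T$ a tree (skeleton) and $l$ a function on its nodes, $\mathbf{F}_x:=l(x)$; tree notions apply via the skeleton. $\mathrm{shoot}_{\mathbf{F}}(v)=\{\bigcup_{x\in C}\mathbf{F}_x: C\text{ a cofinite subset of }\mathrm{sons}_{\mathbf{F}}(v)\}$; $\mathrm{scope}_{\mathbf{F}}(p)=\{x:p\in\mathbf{F}_x\}$. For families $\gamma,\delta$ of sets, $\gamma\gg\delta$ means every nonempty $D\in\delta$ contains some nonempty $G\in\gamma$. $\mathrm{rise}_{\mathbf{F}}(p,U)=\{\mathrm{height}_{\mathbf{F}}(v): v\in\mathrm{scope}_{\mathbf{F}}(p),\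 \mathrm{shoot}_{\mathbf{F}}(v)\gg\{U\}\}$. $\mathbf{F}$ is locally strict if each non-maximal leaf $\mathbf{F}_x$ is the disjoint union of $\mathbf{F}_s$, $s\in\mathrm{sons}(x)$; has strict branches if it has a node and for each branch $B$, $\bigcap_{x\in B}\mathbf{F}_x$ is a singleton; is open in $X$ if all leaves are open in $X$; is a foliage $\omega,\omega$-tree if its skeleton is order-isomorphic to $({}^{<\omega}\omega,\subsetneq)$. A Baire foliage tree on $X$ is an open in $X$, locally strict foliage $\omega,\omega$-tree with strict branches and $\mathbf{F}_{0_{\mathbf{F}}}=X$. *)

From HB Require Import structures.
From mathcomp Require Import all_boot all_order.
From mathcomp Require Import boolp classical_sets functions cardinality topology.
Set Implicit Arguments.
Unset Strict Implicit.
Unset Printing Implicit Defensive.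
Local Open Scope classical_set_scope.

(* A foliage tree F = (T, l): skeleton T = a type of nodes with a strict
   order [tlt], and a labelling [leaf] of nodes by subsets of X. *)
Record foliage (X : Type) := Foliage {
  node : Type;
  tlt : node -> node -> Prop;
  leaf : node -> set X }.

Arguments node {X} f.
Arguments tlt {X} f _ _.
Arguments leaf {X} f _.

Section Foliage.
Context {X : Type} (F : foliage X).
Local Notation T := (node F).
Local Notation lt := (tlt F).

Definition sons (x : T) : set T :=
  [set y | lt x y /\ ~ (exists z, lt x z /\ lt z y)].

(* height(x) = k : the (well-ordered) set of predecessors of x has order type
   k; for a finite natural number k this means it has exactly k elements. *)
Definition height_is (x : T) (k : nat) : Prop :=
  card_eq [set y | lt y x] `I_k.

Definition is_chain (B : set T) : Prop :=
  forall x y, B x -> B y -> x = y \/ lt x y \/ lt y x.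

Definition is_branch (B : set T) : Prop :=
  is_chain B /\ forall C, is_chain C -> B `<=` C -> C = B.

Definition is_least (r : T) : Prop := forall x, x <> r -> lt r x.

Definition shoot (v : T) : set (set X) :=
  [set G | exists C : set T, C `<=` sons v /\ finite_set (sons v `\` C) /\
                             G = \bigcup_(x in C) leaf F x].

Definition scope (p : X) : set T := [set x | leaf F x p].

Definition locally_strict : Prop :=
  forall x, (exists y, lt x y) ->
    leaf F x = \bigcup_(s in sons x) leaf F s /\
    (forall s t, sons x s -> sons x t -> s <> t -> leaf F s `&` leaf F t = set0).

Definition strict_branches : Prop :=
  (exists x : T, True) /\
  forall B, is_branch B -> exists p, \bigcap_(x in B) leaf F x = [set p].

Definition omega_omega_tree : Prop :=
  exists phi : T -> seq nat, bijective phi /\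
    forall x y, lt x y <-> (prefix (phi x) (phi y) /\ phi x <> phi y).

End Foliage.
Arguments sons {X} F x.
Arguments height_is {X} F x k.
Arguments is_chain {X} F B.
Arguments is_branch {X} F B.
Arguments is_least {X} F r.
Arguments shoot {X} F v.
Arguments scope {X} F p.
Arguments locally_strict {X} F.
Arguments strict_branches {X} F.
Arguments omega_omega_tree {X} F.

Definition gg {X : Type} (gamma delta : set (set X)) : Prop :=
  forall D, delta D -> D <> set0 ->
    exists G, gamma G /\ G <> set0 /\ G `<=` D.

Definition rise {X : Type} (F : foliage X) (p : X) (U : set X) : set nat :=
  [set k | exists v, scope F p v /\ height_is F v k /\ gg (shoot F v) [set U]].

Definition open_in {X : topologicalType} (Y S : set X) : Prop :=
  exists V, open V /\ S = V `&` Y.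

(* Baire foliage tree on the subspace Y of X (leaves are subsets of X). *)
Definition baire_foliage_on {X : topologicalType} (Y : set X) (F : foliage X) : Prop :=
  (forall x, open_in Y (leaf F x)) /\
  locally_strict F /\
  omega_omega_tree F /\
  strict_branches F /\
  (exists r, is_least F r /\ leaf F r = Y).

From HB Require Import structures.
From mathcomp Require Import all_boot all_order.
From mathcomp Require Import boolp classical_sets functions cardinality topology.
From Stdlib Require Cantor.
Set Implicit Arguments.
Unset Strict Implicit.
Unset Printing Implicit Defensive.
Local Open Scope classical_set_scope.

(* Index the nodes of F by finite sequences of naturals, so that F becomes a
   labelling L of the tree of such sequences.  The leaves of H are the sets
   L (embed s) minus A, for a strictly monotone map embed between the two
   skeletons built level by level: at odd heights the sons of s go to the sons
   of embed s, while at even heights the point a of A of least index (in a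
   fixed enumeration of A) is deleted from the leaf, whose remainder is
   partitioned by the leaves of F branching off the path of a.  The indices of
   the deleted points strictly increase along a branch of H, so the point of
   the image branch of F is not in A, and the branches of H are strict.  At an
   odd height the shoot of H at s is the shoot of F at embed s with A removed;
   it stays nonempty because every leaf of F has a point outside A (a branch can
   be steered away from the n-th point of A at its n-th step).  Hence
   f_p(n) = height of embed s, for s the node of H of height 2n+1 containing p,
   works. *)

Section StrictPrefix.
Variable T : eqType.
Implicit Types s t u : seq T.

Definition sprefix s t := prefix s t /\ s <> t.

Lemma prefix_takeE s t : prefix s t -> s = take (size s) t.
Proof. by rewrite prefixE => /eqP. Qed.

Lemma prefix_size_eq s t : prefix s t -> size s = size t -> s = t.
Proof. by move=> st E; rewrite (prefix_takeE st) E take_size. Qed.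

Lemma sprefix_size s t : sprefix s t -> size s < size t.
Proof.
move=> [st nst]; rewrite ltn_neqAle size_prefix // andbT.
by apply: contra_notN nst => /eqP; apply: prefix_size_eq.
Qed.

Lemma sprefix_rcons s x : sprefix s (rcons s x).
Proof.
split; first exact: prefix_rcons.
by move=> /(congr1 size); rewrite size_rcons => /n_Sn.
Qed.

Lemma prefix_total s t u : prefix s u -> prefix t u -> prefix s t \/ prefix t s.
Proof.
move=> /prefix_takeE -> /prefix_takeE ->.
case: (leqP (size s) (size t)) => [st|/ltnW ts]; [left|right].
  by rewrite -(take_takel u st) prefix_take.
by rewrite -(take_takel u ts) prefix_take.
Qed.

Lemma sprefix_cases s t :
  s = t \/ sprefix s t \/ sprefix t s <-> prefix s t \/ prefix t s.
Proof.
split=> [[->|[[]|[]]]|st]; [by left; apply: prefix_refl|by left|by right|].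
have [->|ne] := eqVneq s t; first by left.
by right; case: st => ?; [left|right]; split=> //; apply/eqP; rewrite // eq_sym.
Qed.

Lemma prefix_rcons_size s t : prefix s t -> size t = (size s).+1 -> exists x, t = rcons s x.
Proof.
case/lastP: t => [|t x] st; first by [].
rewrite size_rcons => -[ts]; exists x.
by rewrite (prefix_takeE st) -ts -cats1 take_size_cat ?cats1.
Qed.

Lemma sprefix_coverP s t :
  sprefix s t /\ ~ (exists u, sprefix s u /\ sprefix u t) <-> exists x, t = rcons s x.
Proof.
split=> [[st nu]|[x ->]]; last first.
  split=> [|[u [/sprefix_size su /sprefix_size ut]]]; first exact: sprefix_rcons.
  by move: ut; rewrite size_rcons ltnS leqNgt su.
apply: prefix_rcons_size st.1 _; apply/eqP; rewrite eqn_leq sprefix_size // andbT.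
rewrite leqNgt; apply/negP => lt; apply: nu; exists (take (size s).+1 t).
have ts : size (take (size s).+1 t) = (size s).+1 by rewrite size_takel // ltnW.
split; split.
- by rewrite {1}(prefix_takeE st.1) -(take_takel t (leqnSn _)) prefix_take.
- by move=> /(congr1 size); rewrite ts => /n_Sn.
- exact: prefix_take.
- by move=> /(congr1 size); rewrite ts => E; move: lt; rewrite -E ltnn.
Qed.

Lemma prefix_mkseq (c : nat -> T) : {homo mkseq c : m n / m <= n >-> prefix m n}.
Proof.
apply: homo_leq => [|????|n]; [exact: prefix_refl|exact: prefix_trans|].
by rewrite mkseqS prefix_rcons.
Qed.

End StrictPrefix.

Section SeqLeaves.
Variable X : Type.
Implicit Types (L : seq nat -> set X) (Y U : set X).

Definition seq_shoot L s : set (set X) :=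
  [set \bigcup_(i in I) L (rcons s i) | I in [set I : set nat | cofinite_set I]].

Definition seq_rise L (p : X) U : set nat :=
  [set size s | s in [set s | L s p /\ gg (seq_shoot L s) [set U]]].

Definition pointed_branches L : Prop :=
  forall c : nat -> nat, exists q, \bigcap_n L (mkseq c n) = [set q].

Definition seq_tree_on Y L : Prop :=
  [/\ forall s x, L s x <-> exists i, L (rcons s i) x,
      forall s i j x, L (rcons s i) x -> L (rcons s j) x -> i = j,
      pointed_branches L & L [::] = Y].

End SeqLeaves.

Section Skeleton.
Variables (X : Type) (F : foliage X) (psi : seq nat -> node F).
Hypothesis psi_bij : bijective psi.
Hypothesis psi_lt : forall s t, tlt F (psi s) (psi t) <-> sprefix s t.

Let psi_inj : injective psi. Proof. exact: bij_inj. Qed.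

Let psi_surj (y : node F) : exists s, y = psi s.
Proof. by case: psi_bij => phi _ phiK; exists (phi y). Qed.

Lemma sons_iso s y : sons F (psi s) y <-> exists i, y = psi (rcons s i).
Proof.
have [t ->] := psi_surj y.
have -> : sons F (psi s) (psi t) <-> sprefix s t /\ ~ exists u, sprefix s u /\ sprefix u t.
  split=> -[/psi_lt st nu]; split=> // -[z [z1 z2]]; apply: nu.
    by exists (psi z); rewrite !psi_lt.
  by have [u Ez] := psi_surj z; exists u; rewrite -!psi_lt -Ez.
by rewrite sprefix_coverP; split=> -[i E]; exists i; [rewrite E|apply: psi_inj].
Qed.

Lemma height_iso s k : height_is F (psi s) k <-> k = size s.
Proof.
have below : card_eq [set y | tlt F y (psi s)] `I_(size s).
  have [phi psiK phiK] := psi_bij.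
  have phi_lt y : tlt F y (psi s) <-> sprefix (phi y) s by rewrite -psi_lt phiK.
  apply/card_set_bijP; exists (fun y => size (phi y)); split.
  - by move=> y /phi_lt /sprefix_size.
  - move=> y z /set_mem /phi_lt [ys _] /set_mem /phi_lt [zs _] E.
    by rewrite -[y]phiK -[z]phiK (prefix_takeE ys) (prefix_takeE zs) E.
  - move=> k' /= ks; exists (psi (take k' s)); last by rewrite psiK size_takel // ltnW.
    apply/phi_lt; rewrite psiK; split; first exact: prefix_take.
    by move=> /(congr1 size); rewrite size_takel ?(ltnW ks) // => E; move: ks; rewrite E ltnn.
rewrite /height_is; split=> [Hk|->//]; apply/esym/card_eq_II.
by apply: card_eq_trans Hk; rewrite card_eq_sym.
Qed.

Lemma shoot_iso s : shoot F (psi s) = seq_shoot (leaf F \o psi) s.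
Proof.
have psiS_inj : injective (psi \o rcons s) by apply: inj_comp; last exact: rcons_injr.
have sonsE : sons F (psi s) = (psi \o rcons s) @` setT.
  apply/seteqP; split=> [y /sons_iso [i ->]|_ [i _ <-]]; first by exists i.
  by apply/sons_iso; exists i.
apply/seteqP; split=> G.
  move=> [C [Csub [Cfin ->]]].
  have CE : C = (psi \o rcons s) @` ((psi \o rcons s) @^-1` C).
    apply/seteqP; split=> [y Cy|_ [i Ci <-]//].
    by have := Csub y Cy; rewrite sonsE => -[i _ Ey]; exists i => //; move: Cy; rewrite -Ey.
  exists ((psi \o rcons s) @^-1` C); last by rewrite {2}CE bigcup_image.
  apply: sub_finite_set (finite_preimage (in2W psiS_inj) Cfin) => i /= nCi.
  by split=> //; rewrite sonsE; exists i.
move=> [I Icof <-]; exists ((psi \o rcons s) @` I); split.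
  by rewrite sonsE; apply: image_subset.
split; last by rewrite bigcup_image.
apply: sub_finite_set (finite_image (psi \o rcons s) Icof) => y [].
by rewrite sonsE => -[i _ <-] nIi; exists i => // Ii; apply: nIi; exists i.
Qed.

Lemma rise_iso p U : rise F p U = seq_rise (leaf F \o psi) p U.
Proof.
apply/seteqP; split=> k.
  move=> [v [pv [hv g]]]; have [s Ev] := psi_surj v; subst v.
  by move: hv g; rewrite height_iso shoot_iso => -> g; exists s.
by move=> [s [ps g] <-]; exists (psi s); rewrite height_iso shoot_iso.
Qed.

Lemma locally_strict_iso : locally_strict F <->
  (forall s x, leaf F (psi s) x <-> exists i, leaf F (psi (rcons s i)) x) /\
  (forall s i j x, leaf F (psi (rcons s i)) x -> leaf F (psi (rcons s j)) x -> i = j).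
Proof.
have sonsE s : \bigcup_(y in sons F (psi s)) leaf F y = \bigcup_i leaf F (psi (rcons s i)).
  apply/seteqP; split=> x [y]; last first.
    by move=> _ yx; exists (psi (rcons s y)) => //; apply/sons_iso; exists y.
  by move=> Sy yx; have [i Ey] := (sons_iso s y).1 Sy; exists i => //; rewrite -Ey.
split=> [Fls|[Lsplit Ldisj] y _].
  have Fls_psi s := Fls (psi s) (ex_intro _ _ ((psi_lt s _).2 (sprefix_rcons s 0))).
  split=> [s x|s i j x xi xj].
    by have [-> _] := Fls_psi s; rewrite sonsE; split=> [[i _ ?]|[i ?]]; exists i.
  apply: contrapT => ij; have [_ D] := Fls_psi s.
  have : (leaf F (psi (rcons s i)) `&` leaf F (psi (rcons s j))) x by [].
  rewrite D // ?sons_iso; [by exists i|by exists j|].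
  by move=> E; apply: ij; apply: rcons_injr (psi_inj E).
have [s ->] := psi_surj y; split.
  by rewrite sonsE; apply/seteqP; split=> x; rewrite Lsplit => -[i]; exists i.
move=> _ _ /sons_iso [i ->] /sons_iso [j ->] ij; apply/seteqP; split=> // x [xi xj].
by apply: ij; rewrite (Ldisj _ _ _ _ xi xj).
Qed.

Lemma least_iso r : is_least F r <-> r = psi [::].
Proof.
have [t ->] := psi_surj r; split=> [least|->].
  apply: contrapT => nt; have /psi_lt [] := least _ (nesym nt).
  by rewrite prefixs0 => /eqP ->.
move=> y; have [s ->] := psi_surj y => ns; apply/psi_lt; split; first exact: prefix0s.
by move=> s0; apply: ns; rewrite -s0.
Qed.

Lemma chain_iso B : is_chain F B <->
  forall s t, B (psi s) -> B (psi t) -> prefix s t \/ prefix t s.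
Proof.
split=> [chB s t Bs Bt|chB y z].
  apply/sprefix_cases; rewrite -!psi_lt.
  by case: (chB _ _ Bs Bt) => [/psi_inj ->|]; [left|right].
have [s ->] := psi_surj y; have [t ->] := psi_surj z => Bs Bt.
by have /sprefix_cases := chB s t Bs Bt; rewrite -!psi_lt => -[->|]; [left|right].
Qed.

Section Branch.
Variable B : set (node F).
Hypothesis brB : is_branch F B.

Let branch_add z : (forall s, B (psi s) -> prefix s z \/ prefix z s) -> B (psi z).
Proof.
move=> comp_z; have chBz : is_chain F (B `|` [set psi z]).
  apply/chain_iso => s t [Bs|/psi_inj ->] [Bt|/psi_inj ->]; last by left; exact: prefix_refl.
  - exact: (chain_iso B).1 brB.1 s t Bs Bt.
  - exact: comp_z.
  - by case: (comp_z t Bt); [right|left].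
by rewrite -(brB.2 _ chBz (@subsetUl _ _ _)); right.
Qed.

Let branch_take s k : B (psi s) -> B (psi (take k s)).
Proof.
move=> Bs; apply: branch_add => t Bt.
case: ((chain_iso B).1 brB.1 _ _ Bt Bs) => ts; first exact: prefix_total ts (prefix_take _ _).
by right; apply: prefix_trans (prefix_take _ _) ts.
Qed.

Let branch_size n : exists2 s, B (psi s) & size s = n.
Proof.
suff [s Bs ns] : exists2 s, B (psi s) & n <= size s.
  by exists (take n s); [apply: branch_take|rewrite size_takel].
elim: n => [|n [s Bs ns]].
  by exists [::] => //; apply: branch_add => s _; right; apply: prefix0s.
case: (ltnP n (size s)) => [|sn]; first by exists s.
apply: contrapT => noext; apply: (noext); exists (rcons s 0); last by rewrite size_rcons ltnS.
apply: branch_add => t Bt; left.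
case: ((chain_iso B).1 brB.1 _ _ Bt Bs) => [ts|st].
  exact: prefix_trans ts (prefix_rcons _ _).
suff -> : t = s by apply: prefix_rcons.
apply/esym/(prefix_size_eq st)/eqP; rewrite eqn_leq size_prefix //=.
by rewrite leqNgt; apply/negP => lt; apply: noext; exists t => //; apply: leq_ltn_trans ns lt.
Qed.

Lemma branch_mkseq : exists c : nat -> nat, B = [set psi (mkseq c n) | n in setT].
Proof.
pose b n := sval (cid2 (branch_size n)).
have bB n : B (psi (b n)) by rewrite /b; case: cid2.
have bsize n : size (b n) = n by rewrite /b; case: cid2.
have bE s : B (psi s) -> b (size s) = s.
  move=> Bs; have [st|st] := (chain_iso B).1 brB.1 _ _ (bB (size s)) Bs.
    exact: prefix_size_eq.
  exact/esym/prefix_size_eq.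
have bS n : b n.+1 = rcons (b n) (nth 0 (b n.+1) n).
  have /bE : B (psi (take n (b n.+1))) by apply: branch_take.
  rewrite size_takel ?bsize // => ->.
  by rewrite -take_nth ?bsize // -{2}(bsize n.+1) take_size.
exists (fun i => nth 0 (b i.+1) i).
have bmk n : b n = mkseq (fun i => nth 0 (b i.+1) i) n.
  by elim: n => [|n IH]; [apply/size0nil/bsize|rewrite mkseqS -IH [LHS]bS].
apply/seteqP; split=> [y By|_ [n _ <-]]; last by rewrite -bmk.
have [s Ey] := psi_surj y; subst y.
by exists (size s) => //; rewrite -bmk bE.
Qed.

End Branch.

Lemma branch_iso B :
  is_branch F B <-> exists c : nat -> nat, B = [set psi (mkseq c n) | n in setT].
Proof.
split=> [|[c ->]]; first exact: branch_mkseq.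
have chB : is_chain F [set psi (mkseq c n) | n in setT].
  apply/chain_iso => s t [m _ /psi_inj <-] [n _ /psi_inj <-].
  by case: (leqP m n) => [mn|/ltnW nm]; [left|right]; apply: prefix_mkseq.
split=> // C chC BC; apply/seteqP; split=> [y Cy|]; last exact: BC.
have [s Ey] := psi_surj y; subst y.
have Cc : C (psi (mkseq c (size s))) by apply: BC; exists (size s).
exists (size s) => //; congr psi.
case: ((chain_iso C).1 chC _ _ Cy Cc) => st; [apply/esym|]; apply: prefix_size_eq st _;
  by rewrite size_mkseq.
Qed.

Lemma strict_branches_iso : strict_branches F <-> pointed_branches (leaf F \o psi).
Proof.
split=> [[_ Fsb] c|Lpt].
  have [q Eq] := Fsb _ ((branch_iso _).2 (ex_intro _ c erefl)).
  by exists q; rewrite -Eq bigcap_image.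
split=> [|B /branch_iso [c ->]]; first by exists (psi [::]).
by rewrite bigcap_image; apply: Lpt.
Qed.

End Skeleton.

Definition seq_foliage (X : Type) (L : seq nat -> set X) : foliage X :=
  Foliage (fun s t : seq nat => sprefix s t) L.

Section SeqFoliage.
Variables (X : Type) (L : seq nat -> set X).

Let id_bij : bijective (id : seq nat -> node (seq_foliage L)).
Proof. by exists id. Qed.

Let id_lt s t : tlt (seq_foliage L) (id s) (id t) <-> sprefix s t.
Proof. by []. Qed.

Lemma rise_seq_foliage p U : rise (seq_foliage L) p U = seq_rise L p U.
Proof. exact: rise_iso id_bij id_lt p U. Qed.

Lemma seq_foliage_tree (Y : set X) : seq_tree_on Y L ->
  [/\ locally_strict (seq_foliage L), omega_omega_tree (seq_foliage L),
      strict_branches (seq_foliage L) & exists r, is_least (seq_foliage L) r /\ L r = Y].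
Proof.
move=> [Lsplit Ldisj Lpt Lroot]; split.
- exact/(locally_strict_iso id_bij id_lt).
- by exists id.
- exact/(strict_branches_iso id_bij id_lt).
- by exists [::]; split=> //; apply/(least_iso id_bij id_lt).
Qed.

End SeqFoliage.

Lemma baire_seq_foliage (X : topologicalType) (Y : set X) (L : seq nat -> set X) :
  (forall s, open_in Y (L s)) -> seq_tree_on Y L -> baire_foliage_on Y (seq_foliage L).
Proof. by move=> Lopen /seq_foliage_tree []. Qed.

Lemma baire_foliage_seq (X : topologicalType) (Y : set X) (F : foliage X) :
  baire_foliage_on Y F -> exists psi : seq nat -> node F,
    [/\ bijective psi, forall s t, tlt F (psi s) (psi t) <-> sprefix s t,
        forall s, open_in Y (leaf F (psi s)) & seq_tree_on Y (leaf F \o psi)].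
Proof.
move=> [Fopen [Fls [[phi [[psi phiK psiK] phi_lt]] [Fsb [r [r_least rY]]]]]].
have psi_bij : bijective psi by exists phi.
have psi_lt s t : tlt F (psi s) (psi t) <-> sprefix s t by rewrite phi_lt !psiK.
exists psi; split=> //.
have [Lsplit Ldisj] := (locally_strict_iso psi_bij psi_lt).1 Fls.
split=> //; first exact/(strict_branches_iso psi_bij psi_lt).
by rewrite /= -rY -(least_iso psi_bij psi_lt r).1.
Qed.

Lemma last_before_change (Q : nat -> Prop) n N : Q n -> ~ Q N -> n <= N ->
  exists2 m, n <= m & Q m /\ ~ Q m.+1.
Proof.
move=> Qn; elim: N => [|N IH] QN; first by rewrite leqn0 => /eqP nN; rewrite nN in Qn.
rewrite leq_eqVlt ltnS => /predU1P [nN|nN]; first by rewrite nN in Qn.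
by have [QN'|/IH] := pselect (Q N); [exists N|apply].
Qed.

Section SeqTree.
Variables (X : Type) (L : seq nat -> set X).
Hypothesis Lsplit : forall s x, L s x <-> exists i, L (rcons s i) x.
Hypothesis Ldisj : forall s i j x, L (rcons s i) x -> L (rcons s j) x -> i = j.

Definition next_index (x : X) s := xget 0 [set i | L (rcons s i) x].

Fixpoint addr (x : X) n :=
  if n is n.+1 then rcons (addr x n) (next_index x (addr x n)) else [::].

Lemma size_addr x n : size (addr x n) = n.
Proof. by elim: n => //= n IH; rewrite size_rcons IH. Qed.

Lemma addr_prefix x : {homo addr x : m n / m <= n >-> prefix m n}.
Proof.
by apply: homo_leq => [|????|n]; [apply: prefix_refl|apply: prefix_trans|apply: prefix_rcons].
Qed.

Lemma take_addr x m n : m <= n -> take m (addr x n) = addr x m.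
Proof. by move=> /(addr_prefix x) /prefix_takeE; rewrite size_addr => <-. Qed.

Lemma next_indexP x s : L s x -> L (rcons s (next_index x s)) x.
Proof. by move=> /Lsplit [i xi]; apply: (@xgetI _ 0 [set i | L (rcons s i) x] i). Qed.

Lemma addr_mem x n : L [::] x -> L (addr x n) x.
Proof. by move=> x0; elim: n => // n IH; apply: (next_indexP IH). Qed.

Lemma L_prefix s t : prefix s t -> L t `<=` L s.
Proof.
move=> /prefixP [u ->]; elim/last_ind: u => [|u i IH]; first by rewrite cats0.
by rewrite -rcons_cat => x xi; apply/IH/Lsplit; exists i.
Qed.

Lemma addrE x s : L s x -> addr x (size s) = s.
Proof.
elim/last_ind: s => [//|s i IH] xi; have xs := L_prefix (prefix_rcons s i) xi.
by rewrite size_rcons /= IH //; congr rcons; apply: Ldisj (next_indexP xs) xi.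
Qed.

Lemma addrP x s : L [::] x -> L s x <-> addr x (size s) = s.
Proof. by move=> x0; split=> [/addrE //|<-]; apply: addr_mem. Qed.

Hypothesis Lpt : pointed_branches L.

Lemma chain_point (P : nat -> seq nat) : (forall n, prefix (P n) (P n.+1)) ->
  (forall n, n <= size (P n)) -> exists q, \bigcap_n L (P n) = [set q].
Proof.
move=> Pchain Psize; have Pmono : {homo P : m n / m <= n >-> prefix m n}.
  by apply: homo_leq => [|????|//]; [apply: prefix_refl|apply: prefix_trans].
have takeP m n : m <= n -> take m (P n) = take m (P m).
  move=> mn; rewrite [in RHS](prefix_takeE (Pmono _ _ mn)) take_takel //.
have [q Eq] := Lpt (fun i => nth 0 (P i.+1) i); exists q; rewrite -Eq.
have mkE n : mkseq (fun i => nth 0 (P i.+1) i) n = take n (P n).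
  apply: (@eq_from_nth _ 0); rewrite size_mkseq ?size_takel // => i lt_in.
  rewrite nth_mkseq // nth_take // -[in LHS](nth_take 0 (ltnSn i)).
  by rewrite -(takeP i.+1 n lt_in) nth_take.
apply/seteqP; split=> x xP n _; rewrite ?mkE.
  exact: (L_prefix (prefix_take _ _)) (xP n I).
by have := xP (size (P n)) I; rewrite mkE -(prefix_takeE (Pmono _ _ (Psize n))).
Qed.

Lemma addr_separate x y : L [::] x -> L [::] y -> x <> y ->
  exists n, addr x n <> addr y n.
Proof.
move=> Lx Ly xy; apply: contrapT => /forallNP same; apply: xy.
have [q Eq] := @chain_point (addr y) (fun n => prefix_rcons _ _)
  (fun n => eq_leq (esym (size_addr y n))).
have xq : (\bigcap_n L (addr y n)) x.
  by move=> n _; rewrite -(contrapT (same n)); apply: addr_mem.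
have yq : (\bigcap_n L (addr y n)) y by move=> n _; apply: addr_mem.
by rewrite Eq in xq yq; rewrite xq yq.
Qed.

Definition sibling a m j := rcons (addr a m) (bump (next_index a (addr a m)) j).

Lemma sibling_neq_addr a m j : sibling a m j <> addr a m.+1.
Proof. by move=> /rcons_inj [] /eqP; rewrite eq_sym (negbTE (neq_bump _ _)). Qed.

Lemma sibling_notin a m j : ~ L (sibling a m j) a.
Proof. by move=> /addrE; rewrite size_rcons size_addr => /esym /sibling_neq_addr. Qed.

Lemma addr_sibling a m j x : L (sibling a m j) x ->
  addr x m.+1 = sibling a m j /\ forall n, n <= m -> addr x n = addr a n.
Proof.
move=> /addrE; rewrite size_rcons size_addr => Ex; split=> // n nm.
rewrite -(take_addr x (leqW nm)) Ex /sibling -cats1 takel_cat ?size_addr //.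
exact: take_addr.
Qed.

Lemma sibling_disj a m m' j j' x :
  L (sibling a m j) x -> L (sibling a m' j') x -> m = m' /\ j = j'.
Proof.
move=> xj xj'; have [Ex agree] := addr_sibling xj; have [Ex' agree'] := addr_sibling xj'.
have mm' : m = m'.
  case: (ltngtP m m') => // lt; exfalso.
    by apply: (@sibling_neq_addr a m j); rewrite -Ex agree'.
  by apply: (@sibling_neq_addr a m' j'); rewrite -Ex' agree.
subst m'; split=> //; have E : sibling a m j = sibling a m j' by rewrite -Ex Ex'.
by move: E => /rcons_inj [] bj; apply: (can_inj (bumpK _)) bj.
Qed.

Lemma sibling_cover a x n : L [::] a -> L [::] x -> x <> a -> addr x n = addr a n ->
  exists m j, n <= m /\ L (sibling a m j) x.
Proof.
move=> La Lx xa xan; have [N xaN] := addr_separate Lx La xa.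
have nN : n <= N.
  by rewrite leqNgt; apply/negP => /ltnW Nn; apply: xaN; rewrite -!(take_addr _ Nn) xan.
have [m nm [xam xam']] := last_before_change (Q := fun k => addr x k = addr a k) xan xaN nN.
pose c := next_index a (addr a m); pose i := next_index x (addr a m).
have ic : i != c by apply/eqP => ic; apply: xam'; rewrite /= xam -/i ic.
exists m, (unbump c i); split=> //; apply/addrP => //.
by rewrite size_rcons size_addr /sibling -/c unbumpKcond (negbTE ic) add0n /= xam.
Qed.

(* As m ranges over heights at least size w and j over nat, the leaves
   L (sibling a m j) partition L w minus a; puncture enumerates them. *)
Definition puncture (w : seq nat) (a : X) (i : nat) :=
  sibling a (size w + (Cantor.of_nat i).1) (Cantor.of_nat i).2.

Lemma puncture_sprefix w a i : L w a -> sprefix w (puncture w a i).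
Proof.
move=> /addrE Ew; split.
  by rewrite -{1}Ew; apply: prefix_trans (prefix_rcons _ _); apply/addr_prefix/leq_addr.
by move=> /(congr1 size) /eqP; rewrite size_rcons size_addr ltn_eqF // ltnS leq_addr.
Qed.

Lemma puncture_notin w a i : ~ L (puncture w a i) a.
Proof. exact: sibling_notin. Qed.

Lemma puncture_disj w a i i' x : L (puncture w a i) x -> L (puncture w a i') x -> i = i'.
Proof.
move=> /sibling_disj /[apply] -[/addnI k_eq j_eq].
by apply: Cantor.of_nat_inj; rewrite [LHS]surjective_pairing k_eq j_eq -surjective_pairing.
Qed.

Lemma puncture_cover w a x : L w a -> L w x -> x <> a -> exists i, L (puncture w a i) x.
Proof.
move=> Lwa Lwx xa; have L0 := L_prefix (prefix0s w).
have [|m [j [wm Lmj]]] := sibling_cover (L0 _ Lwa) (L0 _ Lwx) xa (n := size w).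
  by rewrite !addrE.
by exists (Cantor.to_nat (m - size w, j)); rewrite /puncture Cantor.cancel_of_to /= subnKC.
Qed.

End SeqTree.

Section Removal.
Variables (X : Type) (L : seq nat -> set X) (A : set X) (e : X -> nat).
Hypothesis Lsplit : forall s x, L s x <-> exists i, L (rcons s i) x.
Hypothesis Ldisj : forall s i j x, L (rcons s i) x -> L (rcons s j) x -> i = j.
Hypothesis Lpt : pointed_branches L.
Hypothesis e_inj : {in A &, injective e}.

Definition least_in w (a : X) := [/\ A a, L w a & forall b, A b -> L w b -> e a <= e b].

Lemma least_in_exists w : (exists2 a, A a & L w a) -> exists a, least_in w a.
Proof.
move=> [a0 Aa0 La0].
have ex : exists k, `[< exists a, [/\ A a, L w a & e a = k] >].
  by exists (e a0); apply/asboolP; exists a0.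
case: (ex_minnP ex) => k /asboolP [a [Aa La <-]] least.
by exists a; split=> // b Ab Lb; apply: least; apply/asboolP; exists b.
Qed.

Lemma least_in_uniq w a b : least_in w a -> least_in w b -> a = b.
Proof.
move=> [Aa La ab] [Ab Lb ba]; apply: e_inj; rewrite ?inE //.
by apply/eqP; rewrite eqn_leq ab ?ba.
Qed.

Definition removal_child w i :=
  if pselect (exists a, least_in w a) is left ex
  then puncture L w (sval (cid ex)) i else rcons w i.

Lemma removal_childP w :
  (exists2 a, least_in w a & removal_child w =1 puncture L w a) \/
  (forall a, A a -> ~ L w a) /\ removal_child w =1 rcons w.
Proof.
rewrite /removal_child; case: pselect => [ex|noleast].
  by left; case: cid => a la; exists a.
by right; split=> // a Aa La; apply: noleast; apply: least_in_exists; exists a.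
Qed.

Definition child (l : nat) w i := if odd l then rcons w i else removal_child w i.

Lemma child_sprefix l w i : sprefix w (child l w i).
Proof.
rewrite /child; case: (odd l); first exact: sprefix_rcons.
case: (removal_childP w) => [[a [_ La _] ->]|[_ ->]]; last exact: sprefix_rcons.
exact: puncture_sprefix.
Qed.

Lemma child_split l w x : (L w `\` A) x <-> exists i, (L (child l w i) `\` A) x.
Proof.
split=> [[Lx Ax]|[i [Lx Ax]]]; last first.
  by split=> //; apply: L_prefix Lsplit _ _ (child_sprefix l w i).1 _ Lx.
rewrite /child; case: (odd l); first by have [i ?] := (Lsplit w x).1 Lx; exists i.
case: (removal_childP w) => [[a [Aa La _] Ea]|[_ Ea]].
  have [|i ?] := puncture_cover Lsplit Ldisj Lpt La Lx; first by move=> xa; rewrite xa in Ax.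
  by exists i; rewrite Ea.
by have [i ?] := (Lsplit w x).1 Lx; exists i; rewrite Ea.
Qed.

Lemma child_disj l w i j x : L (child l w i) x -> L (child l w j) x -> i = j.
Proof.
rewrite /child; case: (odd l); first exact: Ldisj.
case: (removal_childP w) => [[a _ Ea]|[_ Ea]]; rewrite !Ea; last exact: Ldisj.
exact: puncture_disj.
Qed.

Fixpoint embed_from w l s := if s is i :: s then embed_from (child l w i) l.+1 s else w.

Definition embed s := embed_from [::] 0 s.

Lemma embed_rcons s i : embed (rcons s i) = child (size s) (embed s) i.
Proof.
suff gen w l : embed_from w l (rcons s i) = child (l + size s) (embed_from w l s) i.
  exact: gen.
elim: s w l => [|j s IH] w l /=; first by rewrite addn0.
by rewrite IH addSnnS.
Qed.

Lemma embed_prefix s t : prefix s t -> prefix (embed s) (embed t).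
Proof.
move=> /prefixP [u ->]; elim/last_ind: u => [|u i IH]; first by rewrite cats0 prefix_refl.
by rewrite -rcons_cat embed_rcons; apply: prefix_trans IH (child_sprefix _ _ _).1.
Qed.

Lemma size_embed_rcons s i : size (embed s) < size (embed (rcons s i)).
Proof. by rewrite embed_rcons; apply: sprefix_size (child_sprefix _ _ _). Qed.

Lemma size_embed s : size s <= size (embed s).
Proof.
elim/last_ind: s => // s i IH; rewrite size_rcons.
exact: leq_ltn_trans IH (size_embed_rcons s i).
Qed.

Definition removed_leaf s := L (embed s) `\` A.

Lemma removed_split s x : removed_leaf s x <-> exists i, removed_leaf (rcons s i) x.
Proof.
split=> [/(child_split (size s)) [i xi]|[i xi]].
  by exists i; rewrite /removed_leaf embed_rcons.
by apply/(child_split (size s)); exists i; rewrite -embed_rcons.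
Qed.

Lemma removed_disj s i j x :
  removed_leaf (rcons s i) x -> removed_leaf (rcons s j) x -> i = j.
Proof. by rewrite /removed_leaf !embed_rcons => -[xi _] [xj _]; apply: child_disj xi xj. Qed.

Lemma removed_leaf_odd s i :
  odd (size s) -> removed_leaf (rcons s i) = L (rcons (embed s) i) `\` A.
Proof. by move=> odd_s; rewrite /removed_leaf embed_rcons /child odd_s. Qed.

Lemma exists_outside w : exists2 x, L w x & ~ A x.
Proof.
(* The path turns to son 1 exactly when son 0 contains the point of index n. *)
pose step s n :=
  if pselect (exists2 a, A a & e a = n /\ L (rcons s 0) a) is left _ then 1 else 0.
pose fix path n := if n is n.+1 then rcons (path n) (step (path n) n) else w.
have path_size n : n <= size (path n) by elim: n => //= n IH; rewrite size_rcons ltnS.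
have [q Eq] := chain_point Lsplit Lpt (P := path) (fun n => prefix_rcons _ _) path_size.
have Lq n : L (path n) q by have /(_ n I) : (\bigcap_n L (path n)) q by rewrite Eq.
exists q; first exact: (Lq 0).
move=> Aq; have := Lq (e q).+1; rewrite /= /step.
case: pselect => [[a Aa [ea La]]|noa] Lq1.
  have aq : a = q by apply: e_inj; rewrite ?inE.
  by subst a; have := Ldisj La Lq1.
by apply: noa; exists q => //; split.
Qed.

Lemma embed_mkseq_sub c m n : m <= n -> L (embed (mkseq c n)) `<=` L (embed (mkseq c m)).
Proof. by move=> mn; apply/(L_prefix Lsplit)/embed_prefix/prefix_mkseq. Qed.

Lemma least_in_step c j a b :
  least_in (embed (mkseq c j.*2)) a -> least_in (embed (mkseq c j.*2.+2)) b -> e a < e b.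
Proof.
move=> la [Ab Lb _]; have [Aa La least_a] := la.
have Lb1 : L (embed (mkseq c j.*2.+1)) b by apply: embed_mkseq_sub Lb.
have ba : b <> a.
  move=> E; move: Lb1; rewrite E mkseqS embed_rcons size_mkseq /child odd_double.
  case: (removal_childP (embed (mkseq c j.*2))) => [[a' la' ->]|[noA _]].
    by rewrite (least_in_uniq la la'); apply: puncture_notin.
  by have := noA a Aa La.
rewrite ltn_neqAle least_a ?andbT //; last exact: embed_mkseq_sub Lb1.
by apply/eqP => E; apply: ba; apply: e_inj; rewrite ?inE.
Qed.

Lemma least_in_grows c j a : least_in (embed (mkseq c j.*2)) a -> j <= e a.
Proof.
elim: j a => // j IH b lb; have [Ab Lb _] := lb.
have [a la] : exists a, least_in (embed (mkseq c j.*2)) a.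
  by apply: least_in_exists; exists b => //; apply: embed_mkseq_sub Lb; rewrite leq_double.
by apply: leq_ltn_trans (IH a la) _; apply: least_in_step la _; rewrite -doubleS.
Qed.

Lemma removed_pointed : pointed_branches removed_leaf.
Proof.
move=> c; pose P n := embed (mkseq c n).
have P_chain n : prefix (P n) (P n.+1) by apply/embed_prefix/prefix_mkseq.
have P_size n : n <= size (P n) by rewrite -{1}(size_mkseq c n) size_embed.
have [q Eq] := chain_point Lsplit Lpt P_chain P_size.
have Lq n : L (P n) q by have /(_ n I) : (\bigcap_n L (P n)) q by rewrite Eq.
have Aq : ~ A q.
  move=> Aq; have [a la] : exists a, least_in (P (e q).+1.*2) a.
    by apply: least_in_exists; exists q.
  have [_ _ /(_ q Aq (Lq _)) aq] := la.
  by have := leq_trans (least_in_grows la) aq; rewrite ltnn.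
exists q; apply/seteqP; split=> [x xP|x ->]; last by move=> n _; split; [apply: Lq|].
have : (\bigcap_n L (P n)) x by move=> n _; case: (xP n I).
by rewrite Eq.
Qed.

Hypothesis Lroot : L [::] = setT.

Lemma removed_root : removed_leaf [::] = ~` A.
Proof. by rewrite /removed_leaf /= Lroot setTD. Qed.

Lemma removed_seq_tree : seq_tree_on (~` A) removed_leaf.
Proof.
by split; [exact: removed_split|exact: removed_disj|exact: removed_pointed|exact: removed_root].
Qed.

Lemma rise_removal p U n : ~ A p ->
  seq_rise L p U (size (embed (addr removed_leaf p n.*2.+1))) ->
  seq_rise removed_leaf p (U `\` A) n.*2.+1.
Proof.
move=> Ap [t [Lt g_t] tsize]; set s := addr removed_leaf p n.*2.+1 in tsize.
have Ls : removed_leaf s p by apply: (addr_mem removed_split); rewrite removed_root.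
have ts : t = embed s by rewrite -(addrE Lsplit Ldisj Lt) tsize (addrE Lsplit Ldisj Ls.1).
have s_odd : odd (size s) by rewrite size_addr /= odd_double.
exists s; last exact: size_addr.
split=> // _ -> UA0.
have U0 : U <> set0 by apply: contra_not UA0 => ->; rewrite set0D.
have [_ [[I Icof <-] [I0 IU]]] := g_t U erefl U0.
have /eqP/set0P [y [i Ii iy]] := I0.
exists (\bigcup_(i in I) removed_leaf (rcons s i)); split; first by exists I.
split.
  have [z Lz Az] := exists_outside (rcons (embed s) i).
  by apply/eqP/set0P; exists z, i => //; rewrite removed_leaf_odd.
move=> z [j Ij]; rewrite removed_leaf_odd // -ts => -[Lz Az]; split=> //.
by apply: IU; exists j.
Qed.

End Removal.

Lemma removed_open (X : topologicalType) (L : seq nat -> set X) A (e : X -> nat) :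
  (forall s, open_in setT (L s)) -> forall s, open_in (~` A) (removed_leaf L A e s).
Proof.
move=> Lopen s; have [V [oV LV]] := Lopen (embed L A e s).
by exists V; rewrite /removed_leaf LV setIT.
Qed.

Theorem proposition15 (X : topologicalType) (F : foliage X) (A : set X) :
  baire_foliage_on setT F -> countable A ->
  exists H : foliage X, baire_foliage_on (~` A) H /\
    forall p, ~ A p ->
      exists f : nat -> nat, (forall m n, (m < n)%N -> (f m < f n)%N) /\
        forall U, nbhs p U ->
          [set (2 * n).+1 | n in [set n | rise F p U (f n)]]
            `<=` rise H p (U `\` A).
Proof.
move=> /baire_foliage_seq [psi [psi_bij psi_lt Lopen [Lsplit Ldisj Lpt Lroot]]].
move=> /countable_injP [e e_inj]; set L := leaf F \o psi.
pose H := removed_leaf L A e.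
exists (seq_foliage H); split.
  apply: baire_seq_foliage; first exact: removed_open.
  exact: removed_seq_tree.
move=> p Ap; pose g k := size (embed L A e (addr H p k)).
have g_mono : {homo g : m n / m < n}.
  by apply: homo_ltn => [????|k]; [apply: ltn_trans|apply: size_embed_rcons].
(* U `\` A is nonempty in the definition of rise. *)
exists (fun n => g n.*2.+1); split=> [m n mn|U _ _ [n Fn <-]].
  by apply: g_mono; rewrite ltnS ltn_double.
rewrite mul2n rise_seq_foliage; apply: rise_removal => //.
by rewrite -(rise_iso psi_bij psi_lt).
Qed.
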